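(* Let $\mathrm{SDiv}^+_d(\mathbb G)$ be the closed subscheme of $\mathrm{Div}^+_d(\mathbb G)$ consisting of divisors $D$ with $\lambda^dD=[0]$. Then $\mathcal O_{\mathrm{SDiv}^+_d(\mathbb G)}=\mathcal O_X[[c_2,\dots,c_d]]$, i.e. the restrictions of $c_2,\dots,c_d$ induce an isomorphism $\mathcal O_X[[c_2,\dots,c_d]]\cong\mathcal O_{\mathrm{SDiv}^+_d(\mathbb G)}$.
   Context: $\mathbb G$ is an ordinary formal group over $X=\mathrm{spf}(\mathcal O_X)$ with coordinate $x$, so $\mathcal O_{\mathbb G}=\mathcal O_X[[x]]$, and $x(a+b)=F(x(a),x(b))$ for a formal group law $F$. $\mathrm{Div}^+_d(\mathbb G)=\mathbb G^d/\Sigma_d=\mathrm{spf}(\mathcal O_X[[c_1,\dots,c_d]])$, where $c_k$ is the $k$-th elementary symmetric function in $x_1,\dots,x_d$; the point $\sum_i[a_i]$ has $c_k=\sigma_k(x(a_1),\dots,x(a_d))$. The map $\lambda^d\colon\mathrm{Div}^+_d(\mathbb G)\to\mathrm{Div}^+_1(\mathbb G)=\mathbb G$ sends $\sum_{i=1}^d[a_i]$ to $[a_1+\dots+a_d]$. *)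

From mathcomp Require Import all_boot all_algebra.
Unset Printing Implicit Defensive.
Import GRing.Theory.
Local Open Scope ring_scope.

Definition mono (n : nat) := {ffun 'I_n -> nat}.
Definition tdeg {n} (m : mono n) : nat := (\sum_(i < n) m i)%N.

Definition ps (R : Type) (n : nat) := mono n -> R.

Definition ps0 {R : comNzRingType} n : ps R n := fun _ => 0.
Definition ps1 {R : comNzRingType} n : ps R n :=
  fun m => if m == [ffun=> 0%N] then 1 else 0.
Definition psadd {R : comNzRingType} {n} (f g : ps R n) : ps R n := fun m => f m + g m.

Definition pssub {R : comNzRingType} {n} (f g : ps R n) : ps R n := fun m => f m - g m.

Definition bmono {n N} (a : {ffun 'I_n -> 'I_N.+1}) : mono n := [ffun i => nat_of_ord (a i)].

Definition psmul {R : comNzRingType} {n} (f g : ps R n) : ps R n := fun m =>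
  \sum_(a : {ffun 'I_n -> 'I_(tdeg m).+1} | [forall i, (a i <= m i)%N])
     f (bmono a) * g [ffun i => (m i - a i)%N].

Definition psexp {R : comNzRingType} {n} (f : ps R n) (k : nat) : ps R n :=
  iter k (psmul f) (ps1 n).

(* the i-th coordinate variable (0-based); zero series if i >= n *)
Definition psvar {R : comNzRingType} n (i : nat) : ps R n := fun m =>
  if (i < n)%N && [forall j : 'I_n, m j == nat_of_bool ((j : nat) == i)] then 1 else 0.

(* substitution f(g_0, ..., g_{n-1}); meaningful when the g_i have zero
   constant term (then all terms beyond total degree tdeg m vanish) *)
Definition pscomp {R : comNzRingType} {n k} (f : ps R n) (g : 'I_n -> ps R k) : ps R k :=
  fun m => \sum_(a : {ffun 'I_n -> 'I_(tdeg m).+1})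
     f (bmono a) * (\big[@psmul R k/ps1 k]_(i < n) psexp (g i) (a i)) m.

Definition pair2 {R : comNzRingType} {k} (a b : ps R k) : 'I_2 -> ps R k :=
  fun i => if i == ord0 then a else b.

Definition is_fgl {R : comNzRingType} (F : ps R 2) : Prop :=
  [/\ pscomp F (pair2 (psvar 1 0) (ps0 1)) = psvar 1 0,
      pscomp F (pair2 (ps0 1) (psvar 1 0)) = psvar 1 0,
      pscomp F (pair2 (psvar 2 1) (psvar 2 0)) = F &
      pscomp F (pair2 (pscomp F (pair2 (psvar 3 0) (psvar 3 1))) (psvar 3 2))
      = pscomp F (pair2 (psvar 3 0) (pscomp F (pair2 (psvar 3 1) (psvar 3 2))))].

(* fsum F d k = x(a_1 + ... + a_k) = F(...F(F(x_1,x_2),x_3)...,x_k) in R[[x_1..x_d]] *)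
Fixpoint fsum {R : comNzRingType} (F : ps R 2) d (k : nat) : ps R d :=
  match k with
  | 0 => ps0 d
  | k'.+1 => pscomp F (pair2 (fsum F d k') (psvar d k'))
  end.

Definition elemsym {R : comNzRingType} d (k : nat) : ps R d := fun m =>
  if [forall i, (m i <= 1)%N] && (tdeg m == k) then 1 else 0.

Definition in_ideal {R : comNzRingType} {n} (s h : ps R n) : Prop :=
  exists g, h = psmul g s.

(* inclusion R[[c_2..c_{d+1}]] -> R[[c_1..c_{d+1}]] : c_{j} |-> c_{j} *)
Definition incl_tail {R : comNzRingType} {d} (f : ps R d) : ps R d.+1 :=
  pscomp f (fun i : 'I_d => psvar d.+1 (lift ord0 i)).

From HB Require Import structures.
From mathcomp Require Import all_boot all_algebra ring zify.
From Stdlib Require Import FunctionalExtensionality.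

(** Since [F(x, y) = x + y + ...], the series [s] with [s(sigma_1, ..., sigma_d) =
    x(a_1 + ... + a_d)] has no constant term and [c_1]-coefficient [1].  Giving [c_i]
    the weight [i], this says [s = c_1 + (terms of weight >= 2)].  Hence the coefficient
    of [c_1 c^a] in [g s] is [g_a] plus a combination of coefficients of [g] of smaller
    weight, so every [h] is [g s + f(c_2, ..., c_d)] with [g] determined by recursion on
    the weight and [f] read off the monomials free of [c_1]; and [f(c_2, ..., c_d) = g s]
    forces [g = 0], hence [f = 0]. *)

Import GRing.Theory.

Section Monomials.
Context {n : nat}.
Implicit Types (m b c : mono n) (i j : 'I_n).

Definition mono0 : mono n := [ffun=> 0%N].
Definition munit j : mono n := [ffun i => nat_of_bool (i == j)].
Definition madd m b : mono n := [ffun i => (m i + b i)%N].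
Definition msub m b : mono n := [ffun i => (m i - b i)%N].
Definition mscale k m : mono n := [ffun i => (k * m i)%N].
Definition mle b m := [forall i, b i <= m i].
Definition mweight m := (\sum_(i < n) i.+1 * m i)%N.

Definition mtrunc N m : {ffun 'I_n -> 'I_N.+1} := [ffun i => inord (m i)].

Lemma bmono_inj N : injective (@bmono n N).
Proof.
move=> a a' /ffunP eq_aa'; apply/ffunP => i; apply/val_inj.
by have := eq_aa' i; rewrite !ffunE.
Qed.

Lemma bmono_mtrunc N m : (forall i, m i <= N) -> bmono (mtrunc N m) = m.
Proof. by move=> le_mN; apply/ffunP => i; rewrite !ffunE inordK // ltnS. Qed.

Lemma leq_tdeg m i : m i <= tdeg m.
Proof. by rewrite /tdeg (bigD1 i) //= leq_addr. Qed.

Lemma mle_bounded {b m} : mle b m -> forall i, b i <= tdeg m.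
Proof. by move=> /forallP le_bm i; rewrite (leq_trans (le_bm i)) ?leq_tdeg. Qed.

Lemma tdeg_mono0 : tdeg mono0 = 0.
Proof. by rewrite /tdeg big1 // => i _; rewrite ffunE. Qed.

Lemma tdeg_munit j : tdeg (munit j) = 1.
Proof.
rewrite /tdeg (bigD1 j) //= big1 ?ffunE ?eqxx // => i /negbTE neq_ij.
by rewrite ffunE neq_ij.
Qed.

Lemma munit_neq0 j : munit j != mono0.
Proof. by apply/eqP => /ffunP /(_ j); rewrite !ffunE eqxx. Qed.

Lemma mle_refl m : mle m m.
Proof. exact/forallP. Qed.

Lemma mle0m m : mle mono0 m.
Proof. by apply/forallP => i; rewrite ffunE. Qed.

Lemma mle0 b : mle b mono0 -> b = mono0.
Proof.
by move=> /forallP le_b0; apply/ffunP => i; have := le_b0 i; rewrite !ffunE leqn0 => /eqP.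
Qed.

Lemma mle_munit b j : mle b (munit j) -> b = mono0 \/ b = munit j.
Proof.
move=> /forallP le_bj; have le_b0 i : i != j -> b i = 0.
  by move=> /negbTE neq_ij; have := le_bj i; rewrite ffunE neq_ij leqn0 => /eqP.
have := le_bj j; rewrite ffunE eqxx leq_eqVlt ltnS leqn0 => /orP[] /eqP bj.
  right; apply/ffunP => i; rewrite ffunE; case: eqVneq => [->|] //; exact: le_b0.
left; apply/ffunP => i; rewrite ffunE; case: (eqVneq i j) => [->|] //; exact: le_b0.
Qed.

Lemma mle_munit_l {m j} : m j != 0 -> mle (munit j) m.
Proof.
by move=> mj; apply/forallP => i; rewrite ffunE; case: eqVneq => [->|]; rewrite ?lt0n.
Qed.

Lemma mle_maddr m b : mle m (madd m b).
Proof. by apply/forallP => i; rewrite ffunE leq_addr. Qed.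

Lemma maddC : commutative madd.
Proof. by move=> m b; apply/ffunP => i; rewrite !ffunE addnC. Qed.

Lemma maddK b m : msub (madd m b) b = m.
Proof. by apply/ffunP => i; rewrite !ffunE addnK. Qed.

Lemma msubK {b m} : mle b m -> madd (msub m b) b = m.
Proof. by move=> /forallP le_bm; apply/ffunP => i; rewrite !ffunE subnK. Qed.

Lemma msubKm {b m} : mle b m -> msub m (msub m b) = b.
Proof. by move=> /forallP le_bm; apply/ffunP => i; rewrite !ffunE subKn. Qed.

Lemma msubm0 m : msub m mono0 = m.
Proof. by apply/ffunP => i; rewrite !ffunE subn0. Qed.

Lemma msubmm m : msub m m = mono0.
Proof. by apply/ffunP => i; rewrite !ffunE subnn. Qed.

Lemma big_maddE I (r : seq I) (P : pred I) (p : I -> mono n) i :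
  (\big[madd/mono0]_(k <- r | P k) p k) i = (\sum_(k <- r | P k) p k i)%N.
Proof. by apply: (big_morph (fun m => m i)) => [m b|]; rewrite ffunE. Qed.

Lemma eq_munit m j : (m == munit j) = (m j == 1) && [forall i, (i != j) ==> (m i == 0)].
Proof.
apply/eqP/andP => [->|[/eqP mj /forallP m0]].
  by rewrite ffunE eqxx; split=> //; apply/forallP => i; rewrite ffunE; case: eqP.
apply/ffunP => i; rewrite ffunE; case: eqVneq => [->|neq_ij] //.
exact/eqP/(implyP (m0 i)).
Qed.

Lemma mweight_madd m b : mweight (madd m b) = mweight m + mweight b.
Proof. by rewrite /mweight -big_split; apply: eq_bigr => i _; rewrite ffunE mulnDr. Qed.

Lemma mweight_msub {b m} : mle b m -> mweight m = mweight (msub m b) + mweight b.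
Proof. by move=> le_bm; rewrite -mweight_madd msubK. Qed.

Lemma mweight_munit j : mweight (munit j) = j.+1.
Proof.
rewrite /mweight (bigD1 j) //= big1 ?ffunE ?eqxx ?muln1 ?addn0 // => i /negbTE neq_ij.
by rewrite ffunE neq_ij muln0.
Qed.

Lemma leq_mweight m i : i.+1 * m i <= mweight m.
Proof. by rewrite /mweight (bigD1 i) //= leq_addr. Qed.

Definition mtail (m : mono n.+1) : mono n := [ffun i => m (lift ord0 i)].
Definition mcons0 m : mono n.+1 :=
  [ffun j => if unlift ord0 j is Some i then m i else 0%N].

Lemma mcons0_ord0 m : mcons0 m ord0 = 0.
Proof. by rewrite ffunE unlift_none. Qed.

Lemma mtail_mcons0 m : mtail (mcons0 m) = m.
Proof. by apply/ffunP => i; rewrite !ffunE liftK. Qed.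

Lemma eq_mcons0 (m : mono n.+1) c : (m == mcons0 c) = (m ord0 == 0) && (mtail m == c).
Proof.
apply/eqP/andP => [->|[/eqP m0 /eqP <-]]; first by rewrite mcons0_ord0 mtail_mcons0.
by apply/ffunP => j; rewrite !ffunE; case: unliftP => [i|] ->; rewrite ?ffunE.
Qed.

Lemma mtailK (m : mono n.+1) : m ord0 = 0 -> mcons0 (mtail m) = m.
Proof. by move=> m0; apply/esym/eqP; rewrite eq_mcons0 m0 !eqxx. Qed.

End Monomials.

Lemma mweight_le1 n (c : mono n.+1) : mweight c <= 1 -> c = mono0 \/ c = munit ord0.
Proof.
move=> le_c1; have c0 (i : 'I_n.+1) : i != ord0 -> c i = 0.
  move=> neq_i0; have := leq_trans (leq_mweight c i) le_c1.
  by case: i neq_i0 => [[|i] ?] //= _; rewrite mulSn; lia.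
have le_c0 : c ord0 <= 1 by rewrite -[c ord0]mul1n (leq_trans (leq_mweight c ord0)).
apply: mle_munit; apply/forallP => i; rewrite ffunE.
by case: eqVneq => [->|/c0 ->].
Qed.

Local Open Scope ring_scope.

Lemma sum_bmono1 {R : comNzRingType} {n} N (P : pred (mono n)) (G : mono n -> R) b :
  P b -> (forall i, b i <= N)%N ->
  (forall c, P c -> (forall i, c i <= N)%N -> c != b -> G c = 0) ->
  \sum_(a : {ffun 'I_n -> 'I_N.+1} | P (bmono a)) G (bmono a) = G b.
Proof.
move=> Pb le_bN G0; rewrite (big_only1 (mtrunc N b)) /= ?bmono_mtrunc //.
move=> a neq_ab Pa; apply: G0 => // [i|]; first by rewrite ffunE -ltnS.
by apply: contra neq_ab => /eqP eq_ab; apply/eqP/bmono_inj; rewrite eq_ab bmono_mtrunc.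
Qed.

Lemma prod_nat_bool (I : finType) (P B : pred I) :
  (\prod_(i | P i) B i)%N = [forall i, P i ==> B i].
Proof.
case: (boolP [forall i, _]) => [/forallP allB|/forallPn[i]].
  by rewrite big1 // => i /(implyP (allB i)) ->.
by rewrite negb_imply => /andP[Pi /negbTE Bi]; rewrite (bigD1 i) //= Bi.
Qed.

(* Multiplication of dual numbers [x.1 + x.2 e], [e^2 = 0]: the law of first-order jets. *)
Definition dmul {R : comNzRingType} (x y : R * R) : R * R :=
  (x.1 * y.1, x.1 * y.2 + x.2 * y.1).

Section DualNumbers.
Variable R : comNzRingType.

Lemma dmulA : associative (@dmul R).
Proof. by move=> [a b] [c e] [f g]; congr (_, _); rewrite /=; ring. Qed.

Lemma dmulC : commutative (@dmul R).
Proof. by move=> [a b] [c e]; congr (_, _); rewrite /=; ring. Qed.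

Lemma dmul1x : left_id (1, 0) (@dmul R).
Proof. by move=> [a b]; congr (_, _); rewrite /=; ring. Qed.

End DualNumbers.

HB.instance Definition _ (R : comNzRingType) :=
  Monoid.isComLaw.Build (R * R)%type (1, 0) (@dmul R) (@dmulA R) (@dmulC R) (@dmul1x R).

Lemma big_dmul (R : comNzRingType) n (x y : 'I_n -> R) :
  \big[dmul/(1, 0)]_(i < n) (x i, y i) =
  (\prod_(i < n) x i, \sum_(i < n) y i * \prod_(k < n | k != i) x k).
Proof.
elim: n x y => [|n IH] x y; first by rewrite !big_ord0.
have prod_neq0 : \prod_(k < n.+1 | k != ord0) x k = \prod_(k < n) x (lift ord0 k).
  by rewrite big_mkcond big_ord_recl /= mul1r.
have prod_neq_lift (i : 'I_n) : \prod_(k < n.+1 | k != lift ord0 i) x k =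
    x ord0 * \prod_(k < n | k != i) x (lift ord0 k).
  by rewrite (bigD1_ord ord0) ?neq_lift //; under eq_bigl do rewrite (inj_eq lift_inj).
rewrite [LHS]big_ord_recl /= IH /dmul /=; congr (_, _); first by rewrite big_ord_recl.
rewrite big_ord_recl prod_neq0 addrC mulr_sumr; congr (_ + _).
by apply: eq_bigr => i _; rewrite prod_neq_lift mulrCA.
Qed.

Section PowerSeries.
Variable R : comNzRingType.
Context {n : nat}.
Implicit Types (f g P Q : ps R n) (m b p : mono n) (j : 'I_n).

Lemma coef_psmul f g m : psmul f g m =
  \sum_(a : {ffun 'I_n -> 'I_(tdeg m).+1} | mle (bmono a) m)
     f (bmono a) * g (msub m (bmono a)).
Proof.
apply: eq_big => [a|a _]; first by apply: eq_forallb => i; rewrite ffunE.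
by congr (_ * g _); apply/ffunP => i; rewrite !ffunE.
Qed.

Lemma coef0_ps1 : ps1 n mono0 = 1 :> R.
Proof. by rewrite /ps1 eqxx. Qed.

Lemma coef0_psmul f g : psmul f g mono0 = f mono0 * g mono0.
Proof.
rewrite coef_psmul (sum_bmono1 _ (fun b => mle b mono0)
  (fun b => f b * g (msub mono0 b)) _ (mle0m mono0)).
- by rewrite msubm0.
- exact/mle_bounded/mle0m.
- by move=> c /mle0 ->; rewrite eqxx.
Qed.

Lemma coef_unit_psmul f g j :
  psmul f g (munit j) = f (munit j) * g mono0 + f mono0 * g (munit j).
Proof.
pose G b := f b * g (msub (munit j) b).
rewrite coef_psmul (bigID (fun a => bmono a == munit j)) /=; congr (_ + _).
- rewrite (sum_bmono1 _ (fun b => mle b (munit j) && (b == munit j)) G (munit j)).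
  + by rewrite /G msubmm.
  + by rewrite mle_refl eqxx.
  + exact/mle_bounded/mle_refl.
  + by move=> c /andP[_ /eqP ->]; rewrite eqxx.
- rewrite (sum_bmono1 _ (fun b => mle b (munit j) && (b != munit j)) G mono0).
  + by rewrite /G msubm0.
  + by rewrite mle0m eq_sym munit_neq0.
  + exact/mle_bounded/mle0m.
  + by move=> c /andP[/mle_munit[] -> //]; rewrite eqxx.
Qed.

Definition psmon p : ps R n := fun m => if m == p then 1 else 0.

Lemma psmonM p q : psmul (psmon p) (psmon q) = psmon (madd p q).
Proof.
apply: functional_extensionality => m; rewrite coef_psmul /psmon.
case: eqVneq => [->|neq_m].
  rewrite (sum_bmono1 _ (fun b => mle b (madd p q)) (fun b => (if b == p then 1 else 0) *
     (if msub (madd p q) b == q then 1 else 0)) _ (mle_maddr p q)).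
  - by rewrite eqxx maddC maddK eqxx mulr1.
  - exact/mle_bounded/mle_maddr.
  - by move=> c _ _ /negbTE ->; rewrite mul0r.
rewrite big1 // => a le_am; case: eqVneq => [eq_ap|]; last by rewrite mul0r.
case: eqVneq => [eq_q|]; last by rewrite mulr0.
by move: neq_m; rewrite -(msubK le_am) eq_q eq_ap maddC eqxx.
Qed.

Lemma psmonX p k : psexp (psmon p) k = psmon (mscale k p).
Proof.
elim: k => [|k IH].
  by congr psmon; apply/ffunP => i; rewrite !ffunE.
rewrite /psexp iterS -/(psexp _ k) IH psmonM; congr psmon.
by apply/ffunP => i; rewrite !ffunE mulSn.
Qed.

Lemma big_psmon I (r : seq I) (P : pred I) (p : I -> mono n) :
  \big[psmul/ps1 n]_(i <- r | P i) psmon (p i) =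
  psmon (\big[madd/mono0]_(i <- r | P i) p i).
Proof. by rewrite (big_morph psmon (fun p q => esym (psmonM p q)) (erefl (ps1 n))). Qed.

Lemma psvarE j : psvar n j = psmon (munit j).
Proof.
apply: functional_extensionality => m; rewrite /psvar /psmon ltn_ord /=.
congr (if _ then _ else _); apply/forallP/eqP => [m_unit|->].
  by apply/ffunP => i; rewrite ffunE; apply/eqP/m_unit.
by move=> i; rewrite ffunE.
Qed.

Lemma psvar_mono0 (i : nat) : psvar n i mono0 = 0 :> R.
Proof.
rewrite /psvar; case: ltnP => //= lt_in.
by case: forallP => // /(_ (Ordinal lt_in)); rewrite ffunE /= eqxx.
Qed.

Lemma psvar_munit (i : nat) j : psvar n i (munit j) = (i == j)%:R :> R.
Proof.
case: (ltnP i n) => [lt_in|le_ni].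
  rewrite -[i]/(nat_of_ord (Ordinal lt_in)) psvarE /psmon.
  case: (eqVneq (Ordinal lt_in) j) => [-> |neq_ij]; first by rewrite !eqxx.
  rewrite (negbTE neq_ij : (i == j :> nat) = false) ifN //.
  by apply: contra neq_ij => /eqP/ffunP/(_ j); rewrite !ffunE eqxx eq_sym; case: (_ == _).
rewrite /psvar ltnNge le_ni; case: eqVneq => // eq_ij.
by move: (ltn_ord j); rewrite -eq_ij ltnNge le_ni.
Qed.

Definition jet j P : R * R := (P mono0, P (munit j)).

Lemma jet_psmul j : {morph jet j : P Q / psmul P Q >-> dmul P Q}.
Proof. by move=> P Q; rewrite /jet coef0_psmul coef_unit_psmul addrC. Qed.

Lemma jet_ps1 j : jet j (ps1 n) = (1, 0).
Proof. by rewrite /jet coef0_ps1 /ps1 (negbTE (munit_neq0 j)). Qed.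

Lemma jet_psexp j P k : P mono0 = 0 ->
  jet j (psexp P k) = ((k == 0)%:R, (k == 1)%:R * P (munit j)).
Proof.
move=> P0; elim: k => [|k IH]; first by rewrite jet_ps1 mul0r.
rewrite /psexp iterS -/(psexp P k) jet_psmul IH /jet P0 /dmul /=.
by case: k {IH} => [|k] /=; congr (_, _); ring.
Qed.

Lemma coef_pscomp k (f : ps R k) (g : 'I_k -> ps R n) m : pscomp f g m =
  \sum_(a : {ffun 'I_k -> 'I_(tdeg m).+1})
     f (bmono a) * (\big[psmul/ps1 n]_(i < k) psexp (g i) (bmono a i)) m.
Proof. by apply: eq_bigr => a _; under [in RHS]eq_bigr => i _ do rewrite ffunE. Qed.

Lemma coef0_pscomp k (f : ps R k) (g : 'I_k -> ps R n) : pscomp f g mono0 = f mono0.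
Proof.
rewrite coef_pscomp (sum_bmono1 _ xpredT
  (fun c => f c * (\big[psmul/ps1 n]_(i < k) psexp (g i) (c i)) mono0) mono0) //.
- rewrite (big_morph (fun P => P mono0) coef0_psmul coef0_ps1) big1 ?mulr1 // => i _.
  by rewrite ffunE; apply: coef0_ps1.
- by move=> i; rewrite ffunE.
move=> c _ le_c0; case/eqP; apply/ffunP => i.
by move: (le_c0 i); rewrite tdeg_mono0 leqn0 ffunE => /eqP.
Qed.

Lemma coef_unit_pscomp k (f : ps R k) (g : 'I_k -> ps R n) j :
  (forall i, g i mono0 = 0) ->
  pscomp f g (munit j) = \sum_(i < k) f (munit i) * g i (munit j).
Proof.
move=> g0.
have coef_prod (c : mono k) : (\big[psmul/ps1 n]_(i < k) psexp (g i) (c i)) (munit j) =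
    \sum_(i < k) (c == munit i)%:R * g i (munit j).
  rewrite -[LHS]/(jet j _).2 (big_morph (jet j) (jet_psmul j) (jet_ps1 j)).
  under eq_bigr do rewrite jet_psexp //.
  rewrite big_dmul /=; apply: eq_bigr => i _.
  by rewrite -natr_prod prod_nat_bool mulrAC -natrM mulnb -eq_munit.
rewrite coef_pscomp; under eq_bigr do rewrite coef_prod mulr_sumr.
rewrite exchange_big /=; apply: eq_bigr => i _.
rewrite (sum_bmono1 _ xpredT
  (fun c => f c * ((c == munit i)%:R * g i (munit j))) (munit i)) ?eqxx ?mul1r //.
- by move=> l; rewrite tdeg_munit ffunE; case: (_ == _).
- by move=> c _ _ /negbTE ->; rewrite mul0r mulr0.
Qed.

End PowerSeries.

Lemma coef_incl_tail (R : comNzRingType) n (f : ps R n) (m : mono n.+1) :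
  incl_tail f m = if m ord0 == 0%N then f (mtail m) else 0.
Proof.
have monomial (c : mono n) :
    \big[psmul/ps1 n.+1]_(i < n) psexp (psvar n.+1 (lift ord0 i)) (c i) =
    psmon R (mcons0 c).
  under eq_bigr do rewrite psvarE psmonX.
  rewrite big_psmon; congr psmon; apply/ffunP => j; rewrite big_maddE ffunE.
  case: unliftP => [i ->|->]; last first.
    by rewrite big1 // => i _; rewrite !ffunE (negbTE (neq_lift _ _)) muln0.
  rewrite (bigD1 i) //= big1 ?addn0 => [|k neq_ki]; rewrite !ffunE ?eqxx ?muln1 //.
  by rewrite (inj_eq lift_inj) eq_sym (negbTE neq_ki) muln0.
rewrite /incl_tail coef_pscomp; under eq_bigr do rewrite monomial /psmon eq_mcons0.
case: (m ord0 =P 0%N) => m0 /=; last by rewrite big1 // => a _; rewrite mulr0.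
rewrite (sum_bmono1 _ xpredT (fun c => f c * (if mtail m == c then 1 else 0)) (mtail m)).
- by rewrite eqxx mulr1.
- by [].
- by move=> i; rewrite ffunE leq_tdeg.
- by move=> c _ _; rewrite eq_sym => /negbTE ->; rewrite mulr0.
Qed.

Section FormalGroupLaw.
Context {R : comNzRingType} {F : ps R 2}.
Hypothesis fglF : is_fgl F.

Lemma coef_unit_pscomp_pair n (a b : ps R n) j :
  a mono0 = 0 -> b mono0 = 0 ->
  pscomp F (pair2 a b) (munit j) =
  F (munit ord0) * a (munit j) + F (munit (lift ord0 ord0)) * b (munit j).
Proof.
move=> a0 b0; rewrite coef_unit_pscomp => [|i]; last by rewrite /pair2; case: eqP.
by rewrite big_ord_recl big_ord1.
Qed.

Lemma fgl_coef : [/\ F mono0 = 0, F (munit ord0) = 1 & F (munit (lift ord0 ord0)) = 1].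
Proof.
have [unitl unitr _ _] := fglF; split.
- by have := congr1 (fun P => P mono0) unitl; rewrite /= coef0_pscomp psvar_mono0.
- have := congr1 (fun P => P (munit ord0)) unitl.
  by rewrite /= coef_unit_pscomp_pair ?psvar_mono0 // psvar_munit /ps0 /= mulr0 addr0 mulr1.
- have := congr1 (fun P => P (munit ord0)) unitr.
  by rewrite /= coef_unit_pscomp_pair ?psvar_mono0 // psvar_munit /ps0 /= mulr0 add0r mulr1.
Qed.

Lemma fsum_mono0 d k : fsum F d k mono0 = 0.
Proof. by case: k => [|k] //=; rewrite coef0_pscomp; case: fgl_coef. Qed.

Lemma fsum_munit0 d k : fsum F d.+1 k (munit ord0) = (k != 0)%:R.
Proof.
have [_ F1 F2] := fgl_coef; elim: k => [|k IH] //=.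
rewrite coef_unit_pscomp_pair ?fsum_mono0 ?psvar_mono0 // F1 F2 IH psvar_munit !mul1r.
by case: k {IH} => [|k] /=; rewrite ?addr0 ?add0r.
Qed.

Lemma elemsym_munit d k (j : 'I_d) : elemsym d k (munit j) = (k == 1)%N%:R :> R.
Proof.
rewrite /elemsym tdeg_munit eq_sym; case: eqP => _; rewrite ?andbF ?andbT //.
by rewrite ifT //; apply/forallP => i; rewrite ffunE leq_b1.
Qed.

Lemma lambda_series_coef {d} {s : ps R d.+1} :
  pscomp s (fun j : 'I_d.+1 => elemsym d.+1 j.+1) = fsum F d.+1 d.+1 ->
  s mono0 = 0 /\ s (munit ord0) = 1.
Proof.
move=> s_lambda; split; first by rewrite -(fsum_mono0 d.+1 d.+1) -s_lambda coef0_pscomp.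
have := fsum_munit0 d d.+1; rewrite -s_lambda coef_unit_pscomp => [|j]; last first.
  by rewrite /elemsym tdeg_mono0 andbF.
rewrite big_ord_recl big1 => [|j _]; last by rewrite elemsym_munit lift0 mulr0.
by rewrite elemsym_munit mulr1 addr0.
Qed.

End FormalGroupLaw.

Section WeightedDivision.
Context {R : comNzRingType} {n : nat} (s : ps R n.+1).
Hypotheses (s0 : s mono0 = 0) (s1 : s (munit ord0) = 1).
Implicit Types (g h : ps R n.+1) (a b m : mono n.+1).
Local Notation c1 := (munit (@ord0 n)).

(* The coefficient at [m] of [g * (s - c1)]; all terms of [s - c1] have weight [>= 2]. *)
Definition coef_mul_rest g m : R :=
  \sum_(a : {ffun 'I_n.+1 -> 'I_(tdeg m).+1} |
         mle (bmono a) m && (mweight (bmono a) + 2 <= mweight m)%N)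
     g (bmono a) * s (msub m (bmono a)).

Lemma mweight_madd_c1 a : mweight (madd a c1) = (mweight a).+1.
Proof. by rewrite mweight_madd mweight_munit addn1. Qed.

Lemma coef_mul_rest_eq g g' m :
  (forall b, (mweight b + 2 <= mweight m)%N -> g b = g' b) ->
  coef_mul_rest g m = coef_mul_rest g' m.
Proof. by move=> eq_gg'; apply: eq_bigr => a /andP[_ /eq_gg'] ->. Qed.

Lemma coef_psmul_s g a : psmul g s (madd a c1) = g a + coef_mul_rest g (madd a c1).
Proof.
set m := madd a c1; have wt_m : mweight m = (mweight a).+1 by apply: mweight_madd_c1.
rewrite coef_psmul (bigID (fun x => mweight (bmono x) + 2 <= mweight m)%N) /= addrC.
congr (_ + _); rewrite (sum_bmono1 _ (fun b => mle b m && ~~ (mweight b + 2 <= mweight m)%N)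
  (fun b => g b * s (msub m b)) a).
- by rewrite /m maddC maddK s1 mulr1.
- by rewrite mle_maddr wt_m; lia.
- exact/mle_bounded/mle_maddr.
move=> c /andP[le_cm heavy] _ neq_ca.
have : (mweight (msub m c) <= 1)%N by move: heavy; rewrite (mweight_msub le_cm); lia.
case/mweight_le1 => [->|m_c1]; first by rewrite s0 mulr0.
by case/eqP: neq_ca; rewrite -(msubKm le_cm) m_c1 /m maddK.
Qed.

Lemma incl_tail_multiple_eq0 (f : ps R n) g : incl_tail f = psmul g s -> f = ps0 n.
Proof.
move=> eq_fg; have g0 N a : (mweight a < N)%N -> g a = 0.
  elim: N a => [|N IH] a // lt_aN.
  have c1_pos : madd a c1 ord0 != 0%N by rewrite !ffunE eqxx addn1.
  have := coef_incl_tail _ _ f (madd a c1); rewrite eq_fg coef_psmul_s (negbTE c1_pos).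
  rewrite [coef_mul_rest _ _]big1 ?addr0 // => b /andP[_].
  by rewrite mweight_madd_c1 => light; rewrite IH ?mul0r //; lia.
apply: functional_extensionality => c.
have := coef_incl_tail _ _ f (mcons0 c); rewrite eq_fg mcons0_ord0 mtail_mcons0 eqxx.
by rewrite coef_psmul big1 // => a _; rewrite (g0 _ _ (ltnSn _)) mul0r.
Qed.

(* [squot_approx h N] agrees with the quotient of [h] by [s] in weights [< N]. *)
Fixpoint squot_approx h N : ps R n.+1 :=
  if N is N'.+1 then fun a => h (madd a c1) - coef_mul_rest (squot_approx h N') (madd a c1)
  else ps0 n.+1.

Lemma squot_approx_stable h N N' a : (mweight a < N)%N -> (N <= N')%N ->
  squot_approx h N a = squot_approx h N' a.
Proof.
elim: N N' a => [|N IH] N' a; first by rewrite ltn0.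
case: N' => [|N'] // lt_aN le_NN' /=.
congr (_ - _); apply: coef_mul_rest_eq => b.
by rewrite mweight_madd_c1 => light; apply: IH; lia.
Qed.

Definition squot h a := squot_approx h (mweight a).+1 a.

Lemma squotE h a : squot h a = h (madd a c1) - coef_mul_rest (squot h) (madd a c1).
Proof.
rewrite {1}/squot [LHS]/=; congr (_ - _); apply: coef_mul_rest_eq => b.
by rewrite mweight_madd_c1 => light; apply/esym/squot_approx_stable; lia.
Qed.

Definition srem h : ps R n := fun c => h (mcons0 c) - psmul (squot h) s (mcons0 c).

Lemma sdiv_eq h : pssub h (incl_tail (srem h)) = psmul (squot h) s.
Proof.
apply: functional_extensionality => m; rewrite /pssub coef_incl_tail.
case: (m ord0 =P 0%N) => [m0|/eqP m_pos]; first by rewrite /srem mtailK // subKr.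
by rewrite subr0 -(msubK (mle_munit_l m_pos)) coef_psmul_s squotE subrK.
Qed.

End WeightedDivision.

Theorem proposition13p2 (R : comNzRingType) (F : ps R 2) (d : nat) (s : ps R d.+1) :
  is_fgl F ->
  pscomp s (fun j : 'I_d.+1 => elemsym d.+1 j.+1) = fsum F d.+1 d.+1 ->
  (forall h : ps R d.+1, exists f : ps R d,
      in_ideal s (pssub h (incl_tail f))) /\
  (forall f : ps R d, in_ideal s (incl_tail f) -> f = ps0 d).
Proof.
move=> fglF s_lambda; have [s0 s1] := lambda_series_coef fglF s_lambda.
split=> [h | f [g eq_fg]]; first by exists (srem s h), (squot s h); apply: sdiv_eq.
exact: incl_tail_multiple_eq0 eq_fg.
Qed.
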